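(* There does not exist an $S(3,K_4^{(3)}+e,v)$ for $v=5$ or $v=6$.
   Context: $K_4^{(3)}+e$ denotes the 3-uniform hypergraph with vertex set $\{1,2,3,4,5\}$ and edge set $\{\{1,2,3\},\{1,2,4\},\{1,3,4\},\{2,3,4\},\{3,4,5\}\}$. An $S(3,K_4^{(3)}+e,v)$ is a collection of 3-uniform hypergraphs (blocks) on subsets of a $v$-set $X$, each isomorphic to $K_4^{(3)}+e$, whose edge sets partition the set of all 3-subsets of $X$. *)

From mathcomp Require Import all_boot.
Set Implicit Arguments. Unset Strict Implicit. Unset Printing Implicit Defensive.

(* The hypergraph K_4^(3)+e on vertex set 'I_5 (vertices 1..5 of the paper
   are 0..4 here): edges {1,2,3},{1,2,4},{1,3,4},{2,3,4},{3,4,5}. *)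
Definition K4e_edges : {set {set 'I_5}} :=
  [set [set (inord 0 : 'I_5); inord 1; inord 2];
       [set (inord 0 : 'I_5); inord 1; inord 3];
       [set (inord 0 : 'I_5); inord 2; inord 3];
       [set (inord 1 : 'I_5); inord 2; inord 3];
       [set (inord 2 : 'I_5); inord 3; inord 4]].

(* A block on the point set X is a 3-uniform hypergraph on a subset of X
   isomorphic to K_4^(3)+e; since K_4^(3)+e has no isolated vertices, the
   block is determined by its edge set, which is the image of the edges of
   K_4^(3)+e under an injective vertex map 'I_5 -> X. *)
Definition is_K4e_block (X : finType) (B : {set {set X}}) : Prop :=
  exists f : 'I_5 -> X, injective f /\ B = [set f @: e | e : {set 'I_5} in K4e_edges].

Definition is_S3_K4e_design (X : finType) (P : {set {set {set X}}}) : Prop :=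
  (forall B, B \in P -> is_K4e_block B) /\
  partition P [set A : {set X} | #|A| == 3].

From mathcomp Require Import all_boot zify.
Set Implicit Arguments. Unset Strict Implicit. Unset Printing Implicit Defensive.

(* Every block contains a K_4^(3), whose vertex set we call its core: a 4-set
   all of whose 3-subsets are edges of the block.  Two distinct blocks of a
   design have edge-disjoint cores, so the cores meet in at most 2 points and
   together cover at least 6.  As a block has 5 edges, a design on 5 points
   has at least 10/5 = 2 blocks, which is impossible.  On 6 points it has at
   least 20/5 = 4 blocks, whose cores have pairwise disjoint 2-point
   complements: 8 points, which is again impossible. *)

Lemma setD1_of_card_pred (T : finType) (A Q : {set T}) :
  A \subset Q -> #|A|.+1 = #|Q| -> exists2 k, k \in Q & A = Q :\ k.
Proof.
move=> sAQ cAQ.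
have /cards1P[k QAk] : #|Q :\: A| == 1.
  by rewrite cardsD (setIidPr sAQ) -cAQ subSnn.
have kQ : k \in Q by have := set11 k; rewrite -QAk inE => /andP[].
by exists k; rewrite // -QAk setDDr setDv set0U (setIidPr sAQ).
Qed.

Lemma card_disjoint_family (T I : finType) (J : {set I}) (F : I -> {set T}) n :
  {in J &, forall i j, j != i -> [disjoint F i & F j]} ->
  {in J, forall i, #|F i| = n.+1} -> #|J| * n.+1 <= #|T|.
Proof.
move=> disjF cardF.
have F0 : set0 \notin F @: J.
  by apply/imsetP=> -[i Ji Fi0]; have := cardF i Ji; rewrite -Fi0 cards0.
have [trivF injF] := trivIimset disjF F0.
have uniF : {in F @: J, forall A : {set T}, #|A| = n.+1}.
  by move=> _ /imsetP[i Ji ->]; apply: cardF.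
rewrite -(card_in_imset injF).
rewrite -(@card_uniform_partition _ _ _ (cover (F @: J)) uniF).
  exact: max_card.
by apply/and3P; split.
Qed.

Definition spans_K4 (X : finType) (B : {set {set X}}) (Q : {set X}) : bool :=
  (#|Q| == 4) && [forall A : {set X}, (A \subset Q) ==> (#|A| == 3) ==> (A \in B)].

Lemma spans_K4P (X : finType) (B : {set {set X}}) (Q : {set X}) :
  reflect (#|Q| = 4 /\ forall A : {set X}, A \subset Q -> #|A| = 3 -> A \in B)
          (spans_K4 B Q).
Proof.
apply: (iffP andP) => [[/eqP cQ /forallP QB] | [cQ QB]].
  by split=> // A sAQ cA; have := QB A; rewrite sAQ cA.
split; first by rewrite cQ.
by apply/forallP=> A; apply/implyP=> sAQ; apply/implyP=> /eqP; exact: QB.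
Qed.

Lemma spans_K4_imset (X Y : finType) (f : X -> Y) (B : {set {set X}}) Q :
  injective f -> spans_K4 B Q -> spans_K4 [set f @: e | e : {set X} in B] (f @: Q).
Proof.
move=> injf /spans_K4P[cQ QB]; apply/spans_K4P; split=> [|A sAfQ cA].
  by rewrite card_imset.
have fA : f @: (f @^-1: A) = A.
  apply/setP=> y; apply/imsetP/idP=> [[x fxA ->] | Ay]; first by rewrite inE in fxA.
  by have /imsetP[x _ yfx] := subsetP sAfQ y Ay; exists x; rewrite ?inE -?yfx.
rewrite -fA imset_f // QB -?(card_imset _ injf) ?fA //.
by apply/subsetP=> x; rewrite inE => /(subsetP sAfQ); rewrite mem_imset.
Qed.

Lemma K4e_edges_spans_K4 : spans_K4 K4e_edges (~: [set inord 4]).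
Proof.
have cardQ : #|~: [set inord 4] : {set 'I_5}| = 4 by rewrite cardsC1 card_ord.
apply/spans_K4P; split=> // A sAQ cA.
have [|k] := @setD1_of_card_pred _ A _ sAQ; first by rewrite cA cardQ.
rewrite !inE -val_eqE /= inordK // => + ->.
case: k => [[|[|[|[|[|?]]]]] ?] //= _; rewrite /K4e_edges -!orbA;
  do ?[apply/orP; left; apply/eqP/setP=> -[[|[|[|[|[|?]]]]] ?];
       by rewrite !inE -!val_eqE /= ?inordK
      | apply/orP; right].
Qed.

Definition K4_core (X : finType) (B : {set {set X}}) : {set X} :=
  odflt set0 [pick Q | spans_K4 B Q].

Lemma K4_coreP (X : finType) (B : {set {set X}}) :
  is_K4e_block B -> spans_K4 B (K4_core B).
Proof.
move=> [f [injf ->]]; rewrite /K4_core.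
case: pickP => [//|/(_ (f @: ~: [set inord 4]))].
by rewrite spans_K4_imset // K4e_edges_spans_K4.
Qed.

Lemma card_K4_core (X : finType) (B : {set {set X}}) :
  is_K4e_block B -> #|K4_core B| = 4.
Proof. by move/K4_coreP/spans_K4P=> []. Qed.

Lemma card_K4e_block_le (X : finType) (B : {set {set X}}) :
  is_K4e_block B -> #|B| <= 5.
Proof.
move=> [f [_ ->]]; apply: leq_trans (leq_imset_card _ _) _.
by rewrite /K4e_edges !cardsU !cards1; lia.
Qed.

Section Design.

Variables (X : finType) (P : {set {set {set X}}}).
Hypothesis designP : is_S3_K4e_design P.

Lemma design_card_blocks : 'C(#|X|, 3) <= #|P| * 5.
Proof.
have [blockP /and3P[/eqP coverP /eqP trivP _]] := designP.
rewrite -card_draws -coverP -trivP -sum_nat_const.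
by apply: leq_sum => B /blockP; apply: card_K4e_block_le.
Qed.

Lemma design_K4_core_meet B1 B2 : B1 \in P -> B2 \in P -> B1 != B2 ->
  #|K4_core B1 :&: K4_core B2| <= 2.
Proof.
have [blockP /and3P[_ trivP _]] := designP.
move=> B1P B2P neqB; rewrite leqNgt; apply/negP=> meet3.
pose Q12 := K4_core B1 :&: K4_core B2.
have /card_gt0P[A] : 0 < #|[set A : {set X} | A \subset Q12 & #|A| == 3]|.
  by rewrite cards_draws bin_gt0.
rewrite inE subsetI => /andP[/andP[sA1 sA2] /eqP cA].
have /spans_K4P[_ core1] := K4_coreP (blockP _ B1P).
have /spans_K4P[_ core2] := K4_coreP (blockP _ B2P).
have := trivIsetP trivP B1 B2 B1P B2P neqB.
by rewrite -setI_eq0 => /eqP/setP/(_ A); rewrite !inE core1 ?core2.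
Qed.

Lemma design_K4_core_join B1 B2 : B1 \in P -> B2 \in P -> B1 != B2 ->
  6 <= #|K4_core B1 :|: K4_core B2|.
Proof.
have [blockP _] := designP.
move=> B1P B2P neqB; have := design_K4_core_meet B1P B2P neqB.
have := cardsUI (K4_core B1) (K4_core B2).
by rewrite (card_K4_core (blockP _ B1P)) (card_K4_core (blockP _ B2P)); lia.
Qed.

Lemma design_K4_coreC_disjoint B1 B2 : #|X| <= 6 ->
  B1 \in P -> B2 \in P -> B1 != B2 -> [disjoint ~: K4_core B1 & ~: K4_core B2].
Proof.
move=> cardX B1P B2P neqB; rewrite -setI_eq0 -setCU -cards_eq0.
have := design_K4_core_join B1P B2P neqB.
by have := cardsC (K4_core B1 :|: K4_core B2); lia.
Qed.

End Design.

Theorem lemma4p1 (v : nat) (X : finType) :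
  (v = 5 \/ v = 6) -> #|X| = v ->
  ~ (exists P : {set {set {set X}}}, is_S3_K4e_design P).
Proof.
move=> v56 cardX [P designP]; have [blockP _] := designP.
have countP := design_card_blocks designP.
case: v56 => v_eq; rewrite v_eq in cardX; rewrite cardX in countP.
  have /card_gt1P[B1 [B2 [B1P B2P neqB]]] : 1 < #|P|.
    by have C53 : 'C(5, 3) = 10 by []; move: countP; rewrite C53; lia.
  have := design_K4_core_join designP B1P B2P neqB.
  by have := max_card (K4_core B1 :|: K4_core B2); rewrite cardX; lia.
have : #|P| * 2 <= #|X|.
  apply: (@card_disjoint_family _ _ P (fun B => ~: K4_core B)) => [B1 B2 | B BP /=].
    move=> B1P B2P neqB; apply: (design_K4_coreC_disjoint designP) => //.
      by rewrite cardX.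
    by rewrite eq_sym.
  by have := cardsC (K4_core B); rewrite (card_K4_core (blockP _ BP)) cardX; lia.
by have C63 : 'C(6, 3) = 20 by []; move: countP; rewrite C63 cardX; lia.
Qed.
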